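(* Let $X$ be a Banach space and $Y$ a normed space over $K$, let $M>0$, and let $\{F_\alpha\}_{\alpha\in I}$ ($I$ an index set) be a family of continuous $M$-contraction operators from $X$ into $Y$. Suppose that (a) for every $x\in X$ there is a positive number $c_x$ with $\|F_\alpha(x)\|_Y\le c_x$ for every $\alpha\in I$; and (b) there exists a positive constant $L$ such that $\|F_\alpha(x_1+x_2)\|_Y\le L\,\|F_\alpha(x_1)+F_\alpha(x_2)\|_Y$ for every $\alpha\in I$ and all $x_1,x_2\in X$. Then $\{F_\alpha\}$ is uniformly norm bounded, i.e., there is a positive constant $c$ with $\|F_\alpha\|_{B(X,Y)}\le c$ for every $\alpha\in I$.
   Context: $K$ is $\mathbb{R}$ or $\mathbb{C}$; all normed spaces are nontrivial. Operators are arbitrary (not necessarily linear) maps. For normed spaces $X,Y$ and a map $F:X\to Y$, set $\|F\|_{B(X,Y)}=\max\left(\sup_{x\neq 0,x\in X}\frac{\|F(x)\|_Y}{\|x\|_X},\ \|F(0)\|_Y\right)\in[0,\infty]$, and let $B(X,Y)$ be the set of maps $F:X\to Y$ with $\|F\|_{B(X,Y)}<\infty$. An operator $F:X\to Y$ is an $M$-contraction operator if $\|F(kx)\|_Y\le M|k|\,\|F(x)\|_Y$ for every scalar $k\neq 0$ and every $x\neq 0$ in $X$. *)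

From HB Require Import structures.
From mathcomp Require Import all_boot all_order all_algebra.
From mathcomp Require Import all_classical all_reals all_analysis.
From mathcomp Require Import complex.
Set Implicit Arguments. Unset Strict Implicit. Unset Printing Implicit Defensive.
Import Order.TTheory GRing.Theory Num.Theory.
Import numFieldNormedType.Exports.
Local Open Scope ring_scope.

Definition M_contraction (K : numFieldType) (X Y : normedModType K)
    (M : K) (F : X -> Y) : Prop :=
  forall (k : K) (x : X), k != 0 -> x != 0 ->
    `|F (k *: x)| <= M * `|k| * `|F x|.

(* ||F||_{B(X,Y)} <= c, where
   ||F||_{B(X,Y)} = max (sup_{x<>0} ||F x||/||x||, ||F 0||);
   written out: every quotient ||F x||/||x|| (x <> 0) and ||F 0|| are <= c. *)
Definition Bnorm_le (K : numFieldType) (X Y : normedModType K)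
    (F : X -> Y) (c : K) : Prop :=
  (forall x : X, x != 0 -> `|F x| / `|x| <= c) /\ `|F 0| <= c.

Definition theorem3_over (K : numFieldType) : Prop :=
  forall (X : completeNormedModType K) (Y : normedModType K)
         (M : K) (I : Type) (F : I -> X -> Y),
    (exists x : X, x != 0) -> (exists y : Y, y != 0) ->
    0 < M ->
    (forall a : I, continuous (F a)) ->
    (forall a : I, M_contraction M (F a)) ->
    (forall x : X, exists cx : K, 0 < cx /\ forall a : I, `|F a x| <= cx) ->
    (exists L : K, 0 < L /\
       forall (a : I) (x1 x2 : X), `|F a (x1 + x2)| <= L * `|F a x1 + F a x2|) ->
    exists c : K, 0 < c /\ forall a : I, Bnorm_le (F a) c.

(* The closed sets E_n = {x | |F_a x| <= n for all a} cover X by (a), so by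
   Baire's theorem some E_n contains a ball B(x0, r).  Applying (b) to
   x1 = z + x0 and x2 = -x0 bounds every F_a by L (n + c_{-x0}) on the sphere
   |z| = r/2, and the M-contraction property rescales this to
   |F_a x| <= 2 M L (n + c_{-x0}) |x| / r; finally |F_a 0| <= c_0.
   Baire's theorem is proved below by nested balls over any archimedean
   scalar field: the library's version needs realType scalars, and a complex
   Banach space is not a normed space over a realType. *)

From HB Require Import structures.
From mathcomp Require Import all_boot all_order all_algebra.
From mathcomp Require Import all_classical all_reals all_analysis.
From mathcomp Require Import complex.
From mathcomp Require Import ring.
Set Implicit Arguments. Unset Strict Implicit. Unset Printing Implicit Defensive.
Import Order.TTheory GRing.Theory Num.Theory.
Import numFieldNormedType.Exports.
Local Open Scope ring_scope.
Local Open Scope classical_set_scope.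

Section Baire.
Variables (K : numFieldType) (X : completeNormedModType K).

Lemma nested_balls_cvg (c : nat -> X) (r : nat -> K) :
    (forall k, 0 < r k) ->
    (forall k, `|c k - c k.+1| + r k.+1 <= r k) ->
    (forall e, 0 < e -> exists k, r k < e) ->
  exists l, forall k, `|c k - l| < r k *+ 2.
Proof.
move=> r_gt0 c_nested r_small.
have nested k d : `|c k - c (k + d)%N| + r (k + d)%N <= r k.
  elim: d => [|d IHd]; first by rewrite addn0 subrr normr0 add0r.
  rewrite addnS; apply: le_trans IHd.
  apply: le_trans (lerD (ler_distD (c (k + d)%N) _ _) (lexx _)) _.
  by rewrite -addrA lerD2l.
have dist_le k m : (k <= m)%N -> `|c k - c m| <= r k.
  move=> km; have := nested k (m - k)%N; rewrite subnKC //.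
  by apply: le_trans; rewrite lerDl ltW.
have /cvg_ex[l c_l] : cvg (c @ \oo).
  apply: cauchy_cvg; apply: cauchy_exP => e e0.
  have [k rk] := r_small e e0.
  exists (c k), k => // m km; rewrite -ball_normE /=.
  exact: le_lt_trans (dist_le k m km) rk.
exists l => k.
have /cvgr_dist_lt/(_ _ (r_gt0 k))[N _ c_near_l] := c_l.
pose m := maxn N k.
rewrite mulr2n; apply: le_lt_trans (ler_distD (c m) _ _) _.
apply: ler_ltD; first by apply: dist_le; rewrite leq_maxr.
by rewrite distrC; apply: c_near_l; rewrite /= leq_maxl.
Qed.

Lemma ball_outside_closed (E : set X) (x : X) (r e : K) :
    closed E -> 0 < r -> 0 < e -> ~ ball x r `<=` E ->
  exists y s, [/\ 0 < s, s < e, `|x - y| + s <= r & ball y (s *+ 2) `<=` ~` E].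
Proof.
move=> E_closed r0 e0 /existsNP[y /not_implyP[xy Ey]].
have /nbhs_ballP[d /= d0 dE] : nbhs y (~` E).
  by apply: open_nbhs_nbhs; split => //; exact: closed_openC.
have {}xy : `|x - y| < r by move: xy; rewrite -ball_normE.
have [s [s0 sd sr se]] : exists s, [/\ 0 < s, s < d / 2, s < r - `|x - y| & s < e].
  apply: (@filter_ex _ (0 : K)^'+); near=> s; split; near: s.
  - exact: nbhs_right_gt.
  - by apply: nbhs_right_lt; rewrite divr_gt0.
  - by apply: nbhs_right_lt; rewrite subr_gt0.
  - exact: nbhs_right_lt.
exists y, s; split => //; first by rewrite -lerBrDl ltW.
have s2d : s *+ 2 <= d by rewrite -mulr_natr -ler_pdivlMr // ltW.
by move=> z yz; apply: dE; exact: (le_ball s2d yz).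
Unshelve. all: by end_near. Qed.

Hypothesis archiK : Num.archimedean_axiom K.

Theorem Baire_closed_cover (E : nat -> set X) :
    (forall n, closed (E n)) -> (forall x, exists n, E n x) ->
  exists n x r, 0 < r /\ ball x r `<=` E n.
Proof.
move=> E_closed E_cover; apply: contrapT => no_ball.
have /choice[next nextP] (q : nat * (X * {posnum K})) :
    exists p : X * {posnum K}, [/\ p.2%:num < q.1.+1%:R^-1,
      `|q.2.1 - p.1| + p.2%:num <= q.2.2%:num &
      ball p.1 (p.2%:num *+ 2) `<=` ~` E q.1].
  case: q => n [x r].
  have [||y [s [s0 sn xys yE]]] :=
    ball_outside_closed (x := x) (E_closed n) (gt0 r) (_ : 0 < n.+1%:R^-1).
  - by rewrite invr_gt0.
  - by move=> sub; apply: no_ball; exists n, x, r%:num.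
  - by exists (y, PosNum s0).
pose fix cr k := if k is k'.+1 then next (k', cr k') else (0 : X, PosNum ltr01).
have [l l_in] : exists l, forall k, `|(cr k).1 - l| < (cr k).2%:num *+ 2.
  apply: nested_balls_cvg => [k|k|e e0]; first exact: gt0.
    by have [] := nextP (k, cr k).
  have [n en] := archiK e^-1.
  exists n.+1; have [rn _ _] := nextP (n, cr n).
  apply: lt_trans rn _; rewrite -[e in _ < e]invrK ltf_pV2 ?posrE ?invr_gt0 //.
  apply: lt_trans (_ : n%:R < _); last by rewrite ltr_nat.
  by rewrite -[e^-1]gtr0_norm ?invr_gt0.
have [n Enl] := E_cover l.
have [_ _ ball_outside] := nextP (n, cr n).
by apply: (ball_outside l _ Enl); rewrite -ball_normE; exact: l_in n.+1.
Qed.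

End Baire.

Section norm_bounds.
Variables (K : numFieldType) (X Y : normedModType K).

Lemma open_norm_gt (f : X -> Y) (c : K) :
  continuous f -> open [set x | c < `|f x|].
Proof.
move=> f_cont; rewrite openE => x /= cfx; rewrite /interior.
have e0 : 0 < `|f x| - c by rewrite subr_gt0.
near=> y; have : `|f x - f y| < `|f x| - c.
  by near: y; move: (f_cont x) => /cvgr_dist_lt/(_ _ e0).
by move=> /(le_lt_trans (lerB_dist _ _)); rewrite ltrD2l ltrN2.
Unshelve. all: by end_near. Qed.

Lemma closed_norm_le (f : X -> Y) (c : K) :
  continuous f -> c \is Num.real -> closed [set x | `|f x| <= c].
Proof.
move=> f_cont c_real.
rewrite (_ : mkset _ = ~` [set x | c < `|f x|]).
  exact/open_closedC/open_norm_gt.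
by apply/seteqP; split => x /=; rewrite real_leNgt ?normr_real // => /negP.
Qed.

Lemma M_contraction_ratio_le (M C s : K) (F : X -> Y) :
    0 <= M -> 0 < s -> M_contraction M F ->
    (forall z, `|z| = s -> `|F z| <= C) ->
  forall x, x != 0 -> `|F x| / `|x| <= M * C / s.
Proof.
move=> M0 s0 FM FC x x0.
have x_gt0 : 0 < `|x| by rewrite normr_gt0.
pose k := `|x| / s.
have k0 : 0 < k by rewrite divr_gt0.
pose z := k^-1 *: x.
have xE : x = k *: z by rewrite /z scalerA mulfV ?gt_eqF // scale1r.
have z0 : z != 0 by rewrite /z scaler_eq0 negb_or invr_eq0 gt_eqF.
have zs : `|z| = s.
  by rewrite /z normrZ ger0_norm ?invr_ge0 ?ltW // invf_div divfK ?gt_eqF.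
rewrite ler_pdivrMr //.
have := FM k z (lt0r_neq0 k0) z0; rewrite -xE (ger0_norm (ltW k0)) => /le_trans; apply.
have -> : M * C / s * `|x| = M * k * C by rewrite /k; ring.
by apply: (@ler_wpM2l _ (M * k)); [exact: mulr_ge0 M0 (ltW k0) | exact: FC].
Qed.

End norm_bounds.

Section uniform_boundedness.
Variables (K : numFieldType) (X : completeNormedModType K) (Y : normedModType K).
Hypothesis archiK : Num.archimedean_axiom K.
Variables (I : Type) (F : I -> X -> Y).
Hypothesis F_cont : forall a, continuous (F a).
Hypothesis F_ptws_bounded :
  forall x, exists cx, 0 < cx /\ forall a, `|F a x| <= cx.

Lemma uniform_bound_on_ball :
  exists n x0 r, 0 < r /\ forall z, `|x0 - z| < r -> forall a, `|F a z| <= n%:R.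
Proof.
pose E n := \bigcap_a [set x | `|F a x| <= n%:R].
have [||n [x0 [r [r0 x0rE]]]] := Baire_closed_cover archiK (E := E).
- move=> n; apply: closed_bigI => a _.
  by apply: closed_norm_le; [exact: F_cont | exact: realn].
- move=> x; have [cx [cx0 Fcx]] := F_ptws_bounded x.
  have [n] := archiK cx; rewrite gtr0_norm // => cxn.
  by exists n => a _; apply: le_trans (Fcx a) (ltW cxn).
- exists n, x0, r; split => // z x0z a.
  by apply: (x0rE z) => //; rewrite -ball_normE.
Qed.

End uniform_boundedness.

Lemma uniform_boundedness_archimedean (K : numFieldType) :
  Num.archimedean_axiom K -> theorem3_over K.
Proof.
move=> archiK X Y M I F _ _ M0 F_cont FM F_ptws [L [L0 FL]].
have [n [x0 [r [r0 F_ball]]]] := uniform_bound_on_ball archiK F_cont F_ptws.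
have [c1 [c10 Fc1]] := F_ptws (- x0).
have [c0 [c00 Fc0]] := F_ptws 0.
have F_sphere a z : `|z| = r / 2 -> `|F a z| <= L * (n%:R + c1).
  move=> zr; have := FL a (z + x0) (- x0); rewrite addrK => /le_trans; apply.
  apply: ler_wpM2l; first exact: ltW.
  apply: le_trans (ler_normD _ _) (lerD _ (Fc1 a)); apply: F_ball.
  by rewrite opprD addrCA subrr addr0 normrN zr gtr_pMr ?invf_lt1 ?ltr1n.
pose C := M * (L * (n%:R + c1)) / (r / 2).
have C0 : 0 < C.
  have nc1 : 0 < n%:R + c1 by rewrite ltr_wpDl.
  by apply: divr_gt0; [do 2?apply: mulr_gt0 | apply: divr_gt0].
exists (C + c0); split => [|a]; first exact: addr_gt0.
split; last exact: ler_wpDl (ltW C0) (Fc0 a).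
move=> x x0'; apply: le_trans (ler_wpDr (ltW c00) (lexx C)).
have r2 : 0 < r / 2 by rewrite divr_gt0.
exact: M_contraction_ratio_le (ltW M0) r2 (FM a) (F_sphere a) _ x0'.
Qed.

Lemma complex_archimedean (R : realType) : Num.archimedean_axiom R[i].
Proof.
move=> x; exists (Num.bound (Num.sqrt (complex.Re x ^+ 2 + complex.Im x ^+ 2))).
by rewrite normc_def -(rmorph_nat (real_complex R)) ltcR archi_boundP.
Qed.

Theorem theorem3 (R : realType) : theorem3_over R /\ theorem3_over R[i].
Proof.
split; apply: uniform_boundedness_archimedean; last exact: complex_archimedean.
by move=> x; exists (Num.bound `|x|); rewrite archi_boundP.
Qed.
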